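(* For every input permutation, algorithm $\mathcal{D}^2\mathcal{I}$ executes its instruction 6 only at steps where $D_1$ (and $D_2$) is empty.
   Context: The $\mathfrak{D}^2\mathfrak{I}$ machine consists of two decreasing stacks $D_1,D_2$ followed in series by an increasing stack $I$. Elements of $D_1,D_2$ must be in decreasing order from top to bottom (top largest); elements of $I$ in increasing order from top to bottom (top smallest). Operations: $d_0$ pushes the next input element (called $Input$) into $D_1$; $d_1$ moves $Top(D_1)$ to $D_2$; $d_2$ moves $Top(D_2)$ to $I$; $d_3$ pops $Top(I)$ and appends it to the output. Any comparison involving an empty stack is considered true. Conditions: ($\alpha$) $Top(D_2)<Top(I)$; ($\beta$) $Top(D_2)<Top(D_1)$ and $Top(D_1)<Top(I)$; ($\gamma$) $Top(D_1)<Input$, $Input<Top(I)$, and the sequence of input elements from $Input$ up to the first input element larger than $Top(D_2)$ is increasing. Algorithm $\mathcal{D}^2\mathcal{I}$ repeatedly executes the first applicable instruction among: 1. if $Top(I)$ is the next element to be output, perform $d_3$; 2. if the elements contained in $D_1\cup D_2$ are exactly the next elements to be output, move them to the output in increasing order; 3. perform $d_1$ if it is legal and ($\beta$) holds; 4. perform $d_0$ if it is legal and ($\gamma$) holds; 5. perform $d_2$ if it is legal and ($\alpha$) holds; 6. otherwise perform $d_3$. *)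

From mathcomp Require Import all_boot.
Set Implicit Arguments. Unset Strict Implicit. Unset Printing Implicit Defensive.

(* Stacks are lists, head = top. *)
Record state := State {
  inp : seq nat;   (* remaining input, head = Input *)
  d1  : seq nat;   (* decreasing stack D1 (top largest) *)
  d2  : seq nat;   (* decreasing stack D2 (top largest) *)
  ist : seq nat;   (* increasing stack I (top smallest) *)
  out : seq nat
}.

Definition top (s : seq nat) : option nat :=
  if s is x :: _ then Some x else None.

(* strict comparison; any comparison involving an empty stack is true *)
Definition olt (a b : option nat) : bool :=
  match a, b with Some x, Some y => x < y | _, _ => true end.

(* The input is a permutation of 1..n, so the next element to be output
   is (number of elements already output) + 1. *)
Definition next_out (st : state) : nat := (size (out st)).+1.

Definition d0_legal st := (inp st != [::]) && olt (top (d1 st)) (top (inp st)).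
Definition d1_legal st := (d1 st != [::]) && olt (top (d2 st)) (top (d1 st)).
Definition d2_legal st := (d2 st != [::]) && olt (top (d2 st)) (top (ist st)).

Definition cond_alpha st := olt (top (d2 st)) (top (ist st)).
Definition cond_beta st :=
  olt (top (d2 st)) (top (d1 st)) && olt (top (d1 st)) (top (ist st)).
(* the segment of the input from Input up to (and including) the first input
   element larger than Top(D2); the whole remaining input if there is none *)
Definition gamma_segment st : seq nat :=
  take (find (fun x => olt (top (d2 st)) (Some x)) (inp st)).+1 (inp st).
Definition cond_gamma st :=
  [&& olt (top (d1 st)) (top (inp st)), olt (top (inp st)) (top (ist st))
    & sorted ltn (gamma_segment st)].

Definition instr1 st := top (ist st) == Some (next_out st).
Definition instr2 st :=
  (d1 st ++ d2 st != [::]) &&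
  perm_eq (d1 st ++ d2 st) (iota (next_out st) (size (d1 st ++ d2 st))).

Definition choice (st : state) : nat :=
  if instr1 st then 1
  else if instr2 st then 2
  else if d1_legal st && cond_beta st then 3
  else if d0_legal st && cond_gamma st then 4
  else if d2_legal st && cond_alpha st then 5
  else 6.

Definition op_d0 st := match inp st with
  | x :: r => State r (x :: d1 st) (d2 st) (ist st) (out st) | [::] => st end.
Definition op_d1 st := match d1 st with
  | x :: r => State (inp st) r (x :: d2 st) (ist st) (out st) | [::] => st end.
Definition op_d2 st := match d2 st with
  | x :: r => State (inp st) (d1 st) r (x :: ist st) (out st) | [::] => st end.
Definition op_d3 st := match ist st with
  | x :: r => State (inp st) (d1 st) (d2 st) r (rcons (out st) x) | [::] => st end.
Definition op_flush st :=
  State (inp st) [::] [::] (ist st) (out st ++ sort leq (d1 st ++ d2 st)).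

(* one step of algorithm D2I (an impossible d3 on empty I leaves the state) *)
Definition step (st : state) : state :=
  match choice st with
  | 1 => op_d3 st
  | 2 => op_flush st
  | 3 => op_d1 st
  | 4 => op_d0 st
  | 5 => op_d2 st
  | _ => op_d3 st
  end.

Definition init (s : seq nat) : state := State s [::] [::] [::] [::].

Definition terminated (st : state) : bool :=
  [&& inp st == [::], d1 st == [::], d2 st == [::] & ist st == [::]].

From mathcomp Require Import all_boot.

Set Implicit Arguments.
Unset Strict Implicit.
Unset Printing Implicit Defensive.

(* The reachable states satisfy an invariant: the elements of D1 u D2 are
   distinct, both stacks are strictly decreasing, I is strictly increasing,
   and every element of D1 u D2 is smaller than every element of I.  The
   only delicate step is d2: since instruction 3 was not applicable and
   Top(D1) < Top(I), we get Top(D1) < Top(D2), so the element moved into I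
   dominates what remains in D1 u D2.  Given the invariant, a nonempty D2
   always makes instruction 5 applicable, and a nonempty D1 with D2 empty
   always makes instruction 3 applicable; hence instruction 6 can only be
   chosen when both stacks are empty. *)

#[local] Arguments olt : simpl never.

Lemma path_gtn_top x s : path gtn x s = olt (top s) (Some x) && sorted gtn s.
Proof. by case: s. Qed.

Lemma path_ltn_top x s : path ltn x s = olt (Some x) (top s) && sorted ltn s.
Proof. by case: s. Qed.

Lemma gtn_trans : transitive gtn.
Proof. exact: rev_trans ltn_trans. Qed.

Lemma olt_top_of_all x s : all (ltn x) s -> olt (Some x) (top s).
Proof. by case: s => //= y s /andP[]. Qed.

Definition invariant (st : state) : bool :=
  [&& uniq (inp st ++ d1 st ++ d2 st), sorted gtn (d1 st), sorted gtn (d2 st),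
      sorted ltn (ist st) & allrel ltn (d1 st ++ d2 st) (ist st)].

Lemma invariant_init s : uniq s -> invariant (init s).
Proof. by rewrite /invariant /= cats0 => ->. Qed.

Lemma choice3_d1_legal st : choice st = 3 -> d1_legal st.
Proof. by rewrite /choice; do ![case: ifP => //]; case/andP. Qed.

Lemma choice4_d0_gamma st : choice st = 4 -> d0_legal st && cond_gamma st.
Proof. by rewrite /choice; do ![case: ifP => //]. Qed.

Lemma choice_gt3_not_beta st : 3 < choice st -> ~~ (d1_legal st && cond_beta st).
Proof. by rewrite /choice; do ![case: ifP => //]. Qed.

Lemma choice5_alpha st : choice st = 5 -> cond_alpha st.
Proof. by rewrite /choice; do ![case: ifP => //]; case/andP. Qed.

Lemma choice6_not_alpha st : choice st = 6 -> ~~ (d2_legal st && cond_alpha st).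
Proof. by rewrite /choice; do ![case: ifP => //]. Qed.

Lemma invariant_op_d3 st : invariant st -> invariant (op_d3 st).
Proof.
case: st => i a b [|y c] o //; rewrite /invariant /op_d3 /=.
by rewrite path_ltn_top allrel_consr => /and5P[-> -> -> /andP[_ ->] /andP[_ ->]].
Qed.

Lemma invariant_op_flush st : invariant st -> invariant (op_flush st).
Proof.
case: st => i a b c o; rewrite /invariant /= cats0 cat_uniq.
by case/and5P => /andP[-> _] _ _ -> _.
Qed.

Lemma invariant_op_d1 st : invariant st -> d1_legal st -> invariant (op_d1 st).
Proof.
case: st => i [|x a] b c o //; rewrite /invariant /op_d1 /d1_legal /=.
have Hperm : perm_eq (x :: a ++ b) (a ++ x :: b) := permEl (perm_catCA [:: x] a b).
case/and5P => Hu Ha Hb -> Hall Hxb.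
rewrite path_gtn_top Hxb Hb (path_sorted Ha) andbT.
have <- : uniq (i ++ x :: a ++ b) = uniq (i ++ a ++ x :: b).
  by apply/perm_uniq; rewrite perm_cat2l.
by rewrite Hu /allrel -(perm_all _ Hperm).
Qed.

Lemma invariant_op_d0 st :
  invariant st -> d0_legal st && cond_gamma st -> invariant (op_d0 st).
Proof.
case: st => [[|x i] a b c o] //; rewrite /invariant /op_d0 /d0_legal /cond_gamma /=.
have Hperm : perm_eq (x :: i ++ a ++ b) (i ++ x :: a ++ b) := permEl (perm_catCA [:: x] i _).
case/and5P => Hu Ha -> Hc Hall /and4P[Hax _ Hxc _].
rewrite -(perm_uniq Hperm) /= Hu path_gtn_top Hax Ha Hc allrel_consl Hall andbT.
have : path ltn x c by rewrite path_ltn_top Hxc.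
by rewrite (path_sortedE ltn_trans) => /andP[->].
Qed.

Lemma top_d1_lt_top_d2 st :
  invariant st -> ~~ (d1_legal st && cond_beta st) -> olt (top (d1 st)) (top (d2 st)).
Proof.
case: st => i [|w a] [|x b] c o //; rewrite /invariant /d1_legal /cond_beta /=.
case/and5P => Hu _ _ _ /andP[/olt_top_of_all -> _].
rewrite andbT andbb -leqNgt leq_eqVlt => /orP[/eqP Ewx|] //.
by move: Hu; rewrite cat_uniq Ewx /= mem_cat inE eqxx orbT !andbF.
Qed.

Lemma invariant_op_d2 st :
  invariant st -> ~~ (d1_legal st && cond_beta st) -> cond_alpha st ->
  invariant (op_d2 st).
Proof.
move=> Hinv /(top_d1_lt_top_d2 Hinv); move: Hinv.
case: st => i a [|x b] c o //; rewrite /invariant /op_d2 /cond_alpha /=.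
case/and5P => Hu Ha Hb Hc Hall Hax Hxc.
have Hsub : subseq (i ++ a ++ b) (i ++ a ++ x :: b).
  by rewrite !subseq_cat2l subseq_cons.
rewrite (subseq_uniq Hsub Hu) Ha (path_sorted Hb) path_ltn_top Hxc Hc /=.
rewrite allrel_consr all_cat -andbA; apply/and3P; split.
- have : path gtn x a by rewrite path_gtn_top Hax.
  by rewrite (path_sortedE gtn_trans) => /andP[].
- by move: Hb; rewrite (path_sortedE gtn_trans) => /andP[].
- by move: Hall; rewrite !allrel_catl allrel_consl => /and3P[-> _ ->].
Qed.

Lemma invariant_step st : invariant st -> invariant (step st).
Proof.
move=> Hinv; rewrite /step.
case E: (choice st) => [|[|[|[|[|[|k]]]]]]; try exact: invariant_op_d3.
- exact: invariant_op_flush.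
- exact: invariant_op_d1 (choice3_d1_legal E).
- exact: invariant_op_d0 (choice4_d0_gamma E).
- by apply: invariant_op_d2 (choice5_alpha E) => //; apply: choice_gt3_not_beta; rewrite E.
Qed.

Lemma invariant_iter s k : uniq s -> invariant (iter k step (init s)).
Proof.
by move=> Hs; elim: k => [|k IH]; [exact: invariant_init | exact: invariant_step].
Qed.

Lemma invariant_d2_nil st :
  invariant st -> ~~ (d2_legal st && cond_alpha st) -> d2 st = [::].
Proof.
case: st => i a [|x b] c o //; rewrite /invariant /d2_legal /cond_alpha /=.
by case/and5P => _ _ _ _; rewrite allrel_catl allrel_consl => /and3P[_ /olt_top_of_all -> _].
Qed.

Lemma invariant_d1_nil st :
  invariant st -> d2 st = [::] -> ~~ (d1_legal st && cond_beta st) -> d1 st = [::].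
Proof.
case: st => i [|w a] b c o //= + ->; rewrite /invariant /d1_legal /cond_beta /=.
by case/and5P => _ _ _ _ /andP[/olt_top_of_all -> _].
Qed.

Theorem mainTheorem8 (n : nat) (s : seq nat) (k : nat) :
  perm_eq s (iota 1 n) ->
  let st := iter k step (init s) in
  ~~ terminated st -> choice st = 6 ->
  d1 st = [::] /\ d2 st = [::].
Proof.
move=> Hperm st _ H6.
have Hinv : invariant st by apply: invariant_iter; rewrite (perm_uniq Hperm) iota_uniq.
have Hd2 : d2 st = [::] := invariant_d2_nil Hinv (choice6_not_alpha H6).
by rewrite (invariant_d1_nil Hinv Hd2) // choice_gt3_not_beta ?H6.
Qed.
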